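(* Let $S$ be a $\phi$-calibrated surrogate with potential $h:\mathcal{D}\to\mathbb{R}$ and calibration function $\zeta_h$. Suppose $h$ is $(1/\beta)$-strongly convex on $\mathcal{D}$ with respect to a norm $\|\cdot\|$ on $\mathcal{H}$, i.e. $h(u)\ge h(v)+\langle u-v,\nabla h(v)\rangle+\frac{1}{2\beta}\|u-v\|^2$ for all $u,v\in\mathcal{D}$. Then for all $\varepsilon\ge0$, $$\zeta_h(\varepsilon)\ge\frac{\varepsilon^2}{8\,c_{\psi,\|\cdot\|_*}^2\,\beta},\qquad c_{\psi,\|\cdot\|_*}=\max_{z\in\mathcal{Z}}\|\psi(z)\|_*,$$ where $\|\cdot\|_*$ is the dual norm of $\|\cdot\|$.
   Context: Let $\mathcal{Y},\mathcal{Z}$ be finite nonempty sets, $\mathcal{H}$ a finite-dimensional real Euclidean space, $\psi:\mathcal{Z}\to\mathcal{H}$, $\phi:\mathcal{Y}\to\mathcal{H}$, $c\in\mathbb{R}$, and $L(z,y)=\langle\psi(z),\phi(y)\rangle+c$. For $q\in\operatorname{Prob}(\mathcal{Y})$, $\mu(q)=\sum_y q(y)\phi(y)$; $\mathcal{M}=\operatorname{hull}(\phi(\mathcal{Y}))$. $\ell(z,q)=\mathbb{E}_{Y\sim q}L(z,Y)$, $\delta\ell(z,q)=\ell(z,q)-\min_{z'}\ell(z',q)$. $z(u)$ denotes an element of $\arg\min_{z}\langle\psi(z),u\rangle$ chosen by a fixed tie-breaking rule. For $S:\mathcal{V}\times\mathcal{Y}\to\mathbb{R}$, $s(v,q)=\mathbb{E}_{Y\sim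 q}S(v,Y)$, $\delta s(v,q)=s(v,q)-\inf_{v'}s(v',q)$. $D_h(u',u)=h(u')-h(u)-\langle u'-u,\nabla h(u)\rangle$. $S$ is $\phi$-calibrated with potential $h$ if there exist a convex $\mathcal{D}\supseteq\mathcal{M}$, strictly convex differentiable $h:\mathcal{D}\to\mathbb{R}$ and a continuous bijection $t:\mathcal{D}\to\mathcal{V}$ with $\delta s(v,q)=D_h(\mu(q),t^{-1}(v))$ for all $v,q$. Decoding $d(v)=z(t^{-1}(v))$. Calibration function $\zeta_h(\varepsilon)=\inf\{\delta s(v,q):\delta\ell(d(v),q)\ge\varepsilon\}$ ($\inf\emptyset=+\infty$). *)

From Stdlib Require Import Reals ClassicalEpsilon.
From mathcomp Require Import ssreflect ssrfun ssrbool eqtype ssrnat seq choice fintype bigop.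
Set Implicit Arguments. Unset Strict Implicit. Unset Printing Implicit Defensive.
Open Scope R_scope.

(* The finite-dimensional real Euclidean space H is modelled as R^n. *)
Definition vec (n : nat) := 'I_n -> R.
Definition inner {n} (u w : vec n) : R := \big[Rplus/0]_(i < n) (u i * w i).
Definition vadd {n} (u w : vec n) : vec n := fun i => u i + w i.
Definition vsub {n} (u w : vec n) : vec n := fun i => u i - w i.
Definition vscale {n} (a : R) (u : vec n) : vec n := fun i => a * u i.
Definition vzero {n} : vec n := fun _ => 0.
Definition enorm {n} (u : vec n) : R := sqrt (inner u u).

Definition is_norm {n} (N : vec n -> R) : Prop :=
  (forall x, 0 <= N x) /\ (forall x, N x = 0 -> x = vzero) /\
  (forall a x, N (vscale a x) = Rabs a * N x) /\
  (forall x y, N (vadd x y) <= N x + N y).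

(* sup / inf of sets of reals (chosen classically; meaningful when they exist) *)
Definition is_glb (E : R -> Prop) (m : R) : Prop :=
  (forall x, E x -> m <= x) /\ (forall b, (forall x, E x -> b <= x) -> b <= m).
Definition Rinf (E : R -> Prop) : R := epsilon (inhabits 0) (fun m => is_glb E m).
Definition Rsup (E : R -> Prop) : R := epsilon (inhabits 0) (fun m => is_lub E m).

Definition dual_norm {n} (N : vec n -> R) (y : vec n) : R :=
  Rsup (fun r => exists x, N x <= 1 /\ r = inner x y).

Definition fmax {T : finType} (f : T -> R) : R :=
  match enum T with [::] => 0 | x :: s => foldr (fun y acc => Rmax (f y) acc) (f x) s end.
Definition fmin {T : finType} (f : T -> R) : R :=
  match enum T with [::] => 0 | x :: s => foldr (fun y acc => Rmin (f y) acc) (f x) s end.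

Definition c_psi {Z : finType} {n} (N : vec n -> R) (psi : Z -> vec n) : R :=
  fmax (fun z => dual_norm N (psi z)).

Definition is_prob {Y : finType} (q : Y -> R) : Prop :=
  (forall y, 0 <= q y) /\ \big[Rplus/0]_(y : Y) q y = 1.

Definition mu {Y : finType} {n} (phi : Y -> vec n) (q : Y -> R) : vec n :=
  fun i => \big[Rplus/0]_(y : Y) (q y * phi y i).

Definition in_hull {Y : finType} {n} (phi : Y -> vec n) (u : vec n) : Prop :=
  exists q, is_prob q /\ u = mu phi q.

Definition Lt {Y Z : finType} {n} (psi : Z -> vec n) (phi : Y -> vec n) (c : R)
  (z : Z) (y : Y) : R := inner (psi z) (phi y) + c.
Definition ell {Y Z : finType} {n} (psi : Z -> vec n) (phi : Y -> vec n) (c : R)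
  (z : Z) (q : Y -> R) : R := \big[Rplus/0]_(y : Y) (q y * Lt psi phi c z y).
Definition delta_ell {Y Z : finType} {n} (psi : Z -> vec n) (phi : Y -> vec n) (c : R)
  (z : Z) (q : Y -> R) : R :=
  ell psi phi c z q - fmin (fun z' => ell psi phi c z' q).

(* z(u): a fixed tie-breaking selection of argmin_z <psi z, u> *)
Definition is_argmin_rule {Z : finType} {n} (psi : Z -> vec n) (zsel : vec n -> Z) : Prop :=
  forall u z, inner (psi (zsel u)) u <= inner (psi z) u.

Definition s_risk {Y : finType} {V : Type} (S : V -> Y -> R) (v : V) (q : Y -> R) : R :=
  \big[Rplus/0]_(y : Y) (q y * S v y).
Definition delta_s {Y : finType} {V : Type} (S : V -> Y -> R) (v : V) (q : Y -> R) : R :=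
  s_risk S v q - Rinf (fun r => exists v', r = s_risk S v' q).

Definition bregman {n} (h : vec n -> R) (grad : vec n -> vec n) (u' u : vec n) : R :=
  h u' - h u - inner (vsub u' u) (grad u).

Definition convex_set {n} (D : vec n -> Prop) : Prop :=
  forall u w l, D u -> D w -> 0 <= l <= 1 -> D (vadd (vscale l u) (vscale (1 - l) w)).

Definition strictly_convex_on {n} (D : vec n -> Prop) (h : vec n -> R) : Prop :=
  forall u w l, D u -> D w -> u <> w -> 0 < l < 1 ->
    h (vadd (vscale l u) (vscale (1 - l) w)) < l * h u + (1 - l) * h w.

Definition gradient_on {n} (D : vec n -> Prop) (h : vec n -> R) (grad : vec n -> vec n) : Prop :=
  forall u, D u -> forall eps, 0 < eps -> exists delta, 0 < delta /\
    forall w, D w -> enorm (vsub w u) < delta ->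
      Rabs (h w - h u - inner (vsub w u) (grad u)) <= eps * enorm (vsub w u).

Definition euclid_open {n} (O : vec n -> Prop) : Prop :=
  forall x, O x -> exists r, 0 < r /\ forall y, enorm (vsub y x) < r -> O y.
Definition is_topology {V : Type} (openV : (V -> Prop) -> Prop) : Prop :=
  openV (fun _ => True) /\ openV (fun _ => False) /\
  (forall A B, openV A -> openV B -> openV (fun x => A x /\ B x)) /\
  (forall (I : Type) (F : I -> V -> Prop), (forall i, openV (F i)) ->
      openV (fun x => exists i, F i x)).
Definition continuous_on {n} {V : Type} (openV : (V -> Prop) -> Prop)
  (D : vec n -> Prop) (t : vec n -> V) : Prop :=
  forall U, openV U -> exists O, euclid_open O /\
    forall u, D u -> (U (t u) <-> O u).

Definition phi_calibrated {Y : finType} {n} {V : Type} (openV : (V -> Prop) -> Prop)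
  (S : V -> Y -> R) (phi : Y -> vec n) (D : vec n -> Prop) (h : vec n -> R)
  (grad : vec n -> vec n) (t : vec n -> V) (tinv : V -> vec n) : Prop :=
  convex_set D /\ (forall u, in_hull phi u -> D u) /\
  strictly_convex_on D h /\ gradient_on D h grad /\
  is_topology openV /\ continuous_on openV D t /\
  (forall v, D (tinv v) /\ t (tinv v) = v) /\ (forall u, D u -> tinv (t u) = u) /\
  (* inf_{v'} s(v', q) is a (finite) real number *)
  (forall q, is_prob q -> exists m, is_glb (fun r => exists v, r = s_risk S v q) m) /\
  (forall v q, is_prob q -> delta_s S v q = bregman h grad (mu phi q) (tinv v)).

Definition strongly_convex_on {n} (D : vec n -> Prop) (h : vec n -> R)
  (grad : vec n -> vec n) (N : vec n -> R) (beta : R) : Prop :=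
  forall u w, D u -> D w ->
    h u >= h w + inner (vsub u w) (grad w) + / (2 * beta) * (N (vsub u w)) ^ 2.

Definition decode {V : Type} {Z : finType} {n} (zsel : vec n -> Z) (tinv : V -> vec n)
  (v : V) : Z := zsel (tinv v).

(* Fix v, q with delta_ell(d(v), q) >= eps and put u = t^-1(v), mu = mu(q), w = mu - u.
   1. Calibration and strong convexity give  delta_s(v, q) = D_h(mu, u) >= N(w)^2/(2 beta).
   2. The expected loss is affine in the mean:  ell(z, q) = <psi z, mu> + c.  As z(u)
      minimises <psi z, u>, for a minimiser z* of ell(., q) we get
        delta_ell = <psi z(u) - psi z*, mu> <= <psi z(u), w> - <psi z*, w> <= 2 c N(w),
      by the Hoelder inequality <w, y> <= N(w) N_*(y).
   3. Hence eps <= 2 c N(w), so eps^2/(8 c^2 beta) <= N(w)^2/(2 beta) <= delta_s(v, q).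
   The one analytic ingredient is that the dual norm is an honest supremum, i.e. that
   the N-unit ball is bounded:  m |x_i| <= N x  for some m > 0.  This finite-dimensional
   norm equivalence is obtained by minimising N over the faces of the unit cube, with a
   coordinate-by-coordinate extreme value argument (box_min) resting on the
   one-dimensional extreme value theorem. *)
Set Warnings "-notation-overridden,-redundant-canonical-projection".
From HB Require Import structures.
From Stdlib Require Import Reals Lra Psatz ClassicalEpsilon FunctionalExtensionality.
From mathcomp Require Import ssreflect ssrfun ssrbool eqtype ssrnat seq choice fintype bigop.
Open Scope R_scope.

(* (R, +, 0) is a commutative monoid over which * distributes, so that the generic
   bigop lemmas (big_split, big_distrr, exchange_big) apply to real sums. *)
Lemma RplusA : associative Rplus. Proof. by move=> *; ring. Qed.
Lemma RplusC : commutative Rplus. Proof. by move=> *; ring. Qed.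
Lemma Rplus0 : left_id 0 Rplus. Proof. by move=> *; ring. Qed.
Lemma Rmul0l : left_zero 0 Rmult. Proof. by move=> *; ring. Qed.
Lemma Rmul0r : right_zero 0 Rmult. Proof. by move=> *; ring. Qed.
Lemma RmulDl : left_distributive Rmult Rplus. Proof. by move=> *; ring. Qed.
Lemma RmulDr : right_distributive Rmult Rplus. Proof. by move=> *; ring. Qed.
HB.instance Definition _ := Monoid.isComLaw.Build R 0 Rplus RplusA RplusC Rplus0.
HB.instance Definition _ := Monoid.isMulLaw.Build R 0 Rmult Rmul0l Rmul0r.
HB.instance Definition _ := Monoid.isAddLaw.Build R Rmult Rplus RmulDl RmulDr.

Lemma sumR_le {I} (r : seq I) (f g : I -> R) :
  (forall i, f i <= g i) -> \big[Rplus/0]_(i <- r) f i <= \big[Rplus/0]_(i <- r) g i.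
Proof.
move=> fg; elim: r => [|x r IH]; rewrite ?big_nil ?big_cons; first lra.
by have := fg x; lra.
Qed.

Lemma inner_comm {n} (a b : vec n) : inner a b = inner b a.
Proof. by rewrite /inner; apply: eq_bigr => i _; ring. Qed.

Lemma inner_scale_l {n} (a : R) (x y : vec n) : inner (vscale a x) y = a * inner x y.
Proof. by rewrite /inner big_distrr /=; apply: eq_bigr => i _; rewrite /vscale; ring. Qed.

Lemma inner_sub_r {n} (a b c : vec n) : inner a (vsub b c) = inner a b - inner a c.
Proof.
rewrite /inner /vsub (eq_bigr (fun i => a i * b i + -1 * (a i * c i))); last first.
  by move=> i _; ring.
by rewrite big_split /= -big_distrr /=; ring.
Qed.

Lemma inner_zero_l {n} (y : vec n) : inner vzero y = 0.
Proof.
rewrite /inner (eq_bigr (fun i => 0 * y i)) // -big_distrr /=; ring.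
Qed.

(* Minima and maxima over a nonempty finite type fold a selection operator, so the
   extremum is a value of the function. *)
Lemma foldr_select_attained {T : eqType} (sel : R -> R -> R) (f : T -> R) x s :
  (forall a b, sel a b = a \/ sel a b = b) ->
  exists z, z \in x :: s /\ foldr (fun y acc => sel (f y) acc) (f x) s = f z.
Proof.
move=> selP; elim: s => [|y s [z [zs IH]]] /=; first by exists x; rewrite mem_head.
rewrite IH; case: (selP (f y) (f z)) => ->; first by exists y; rewrite !inE eqxx orbT.
by exists z; split => //; move: zs; rewrite !inE => /orP [->|->]; rewrite ?orbT.
Qed.

Lemma foldr_max_ge {T : eqType} (f : T -> R) x s z :
  z \in x :: s -> f z <= foldr (fun y acc => Rmax (f y) acc) (f x) s.
Proof.
elim: s z => [|y s IH] z /=; first by rewrite inE => /eqP ->; lra.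
have := Rmax_l (f y) (foldr (fun y acc => Rmax (f y) acc) (f x) s).
have := Rmax_r (f y) (foldr (fun y acc => Rmax (f y) acc) (f x) s).
rewrite !inE => ? ? /or3P [/eqP ->|/eqP ->|zs].
- by have := IH x (mem_head _ _); lra.
- lra.
- by have := IH z; rewrite inE zs orbT => /(_ isT); lra.
Qed.

Lemma fmax_ge {T : finType} (f : T -> R) z : f z <= fmax f.
Proof.
rewrite /fmax; have : z \in enum T by rewrite mem_enum.
by case: (enum T) => [|x s] //; apply: foldr_max_ge.
Qed.

Lemma fmin_attained {T : finType} (f : T -> R) : inhabited T -> exists z, fmin f = f z.
Proof.
case=> z0; rewrite /fmin; have : z0 \in enum T by rewrite mem_enum.
case: (enum T) => [|x s] // _.
have selP : forall a b, Rmin a b = a \/ Rmin a b = b.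
  by move=> a b; rewrite /Rmin; case: Rle_dec; auto.
by have [z [_ ->]] := foldr_select_attained _ f x s selP; exists z.
Qed.

Lemma fmax_attained {T : finType} (f : T -> R) : inhabited T -> exists z, fmax f = f z.
Proof.
case=> z0; rewrite /fmax; have : z0 \in enum T by rewrite mem_enum.
case: (enum T) => [|x s] // _.
have selP : forall a b, Rmax a b = a \/ Rmax a b = b.
  by move=> a b; rewrite /Rmax; case: Rle_dec; auto.
by have [z [_ ->]] := foldr_select_attained _ f x s selP; exists z.
Qed.

Lemma lipschitz_continuity (G : R -> R) K : 0 <= K ->
  (forall a b, Rabs (G a - G b) <= K * Rabs (a - b)) -> forall x, continuity_pt G x.
Proof.
move=> K_ge0 G_lip x eps eps_gt0; exists (eps / (K + 1)); split.
  by apply: Rdiv_lt_0_compat; lra.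
move=> y [_ /= yx]; rewrite /R_dist in yx *.
have -> : eps = eps / (K + 1) * (K + 1) by field; lra.
by have := G_lip y x; have := Rabs_pos (y - x); nra.
Qed.

Definition upd {n} (x : vec n) (i : 'I_n) (b : R) : vec n :=
  fun j => if j == i then b else x j.

Lemma upd_same {n} (x : vec n) i b : upd x i b i = b.
Proof. by rewrite /upd eqxx. Qed.

Lemma upd_other {n} (x : vec n) i j b : j != i -> upd x i b j = x j.
Proof. by rewrite /upd => /negbTE ->. Qed.

Definition InBox {n} (r : R) (s : seq 'I_n) (x0 x : vec n) : Prop :=
  forall j, (j \in s -> Rabs (x j) <= r) /\ (j \notin s -> x j = x0 j).

Definition clamp (r a : R) : R := Rmax (- r) (Rmin r a).

Lemma clamp_lipschitz r a b : 0 <= r -> Rabs (clamp r a - clamp r b) <= Rabs (a - b).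
Proof. by rewrite /clamp /Rmax /Rmin; repeat case: Rle_dec; split_Rabs; lra. Qed.

Lemma clamp_id r a : Rabs a <= r -> clamp r a = a.
Proof. by rewrite /clamp /Rmax /Rmin; repeat case: Rle_dec; split_Rabs; lra. Qed.

(* Induction on the free coordinates: with one more free
   coordinate i, the partial minimum value as a function of the value of coordinate i
   is again Lipschitz, so the one-dimensional extreme value theorem applies. *)
Section BoxMinimum.
Variables (n : nat) (F : vec n -> R) (L : 'I_n -> R) (r : R).
Hypothesis L_ge0 : forall i, 0 <= L i.
Hypothesis r_ge0 : 0 <= r.
Hypothesis F_lipschitz :
  forall y i b, Rabs (F (upd y i b) - F y) <= L i * Rabs (b - y i).

Definition box_minimum (s : seq 'I_n) (x0 y : vec n) : Prop :=
  InBox r s x0 y /\ forall z, InBox r s x0 z -> F y <= F z.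

Section AddCoordinate.
Variables (i : 'I_n) (s : seq 'I_n) (x0 : vec n).
Hypothesis i_notin_s : i \notin s.
Hypothesis box_min_s : forall x1, exists y, box_minimum s x1 y.

Definition slice (a : R) : vec n := upd x0 i (clamp r a).
Definition slice_min (a : R) : vec n := epsilon (inhabits x0) (box_minimum s (slice a)).
Definition slice_value (a : R) : R := F (slice_min a).

Lemma slice_minP a : box_minimum s (slice a) (slice_min a).
Proof. exact: epsilon_spec (box_min_s (slice a)). Qed.

Lemma slice_min_coord a : slice_min a i = clamp r a.
Proof. by have [y_in _] := slice_minP a; have [_ ->] := y_in i => //; rewrite /slice upd_same. Qed.

(* Moving the minimiser of slice a into slice b costs at most L i |a - b|. *)
Lemma slice_value_le a b : slice_value b <= slice_value a + L i * Rabs (a - b).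
Proof.
set y := slice_min a; have [y_in _] : box_minimum s (slice a) y := slice_minP a.
have [_ min_b] := slice_minP b.
have moved_in : InBox r s (slice b) (upd y i (clamp r b)).
  move=> j; have [y_s y_out] := y_in j; split.
    move=> js; have ji : j != i by apply/eqP => ji; move: i_notin_s; rewrite -ji js.
    by rewrite upd_other //; apply: y_s.
  move=> js; case: (eqVneq j i) => [->|ji]; first by rewrite /slice !upd_same.
  by rewrite /slice !upd_other // y_out // /slice upd_other.
have := min_b _ moved_in; have := F_lipschitz y i (clamp r b).
rewrite (slice_min_coord a : y i = _) (Rabs_minus_sym a b).
have := clamp_lipschitz r b a r_ge0; have := L_ge0 i.
have := Rle_abs (F (upd y i (clamp r b)) - F y); rewrite /slice_value -/y; nra.
Qed.

Lemma slice_value_continuous a : continuity_pt slice_value a.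
Proof.
apply: (lipschitz_continuity _ _ (L_ge0 i)) => b c.
by have := slice_value_le b c; have := slice_value_le c b;
  rewrite (Rabs_minus_sym c b); split_Rabs; lra.
Qed.

Lemma box_min_cons : exists y, box_minimum (i :: s) x0 y.
Proof.
have [a [a_min a_bd]] : exists a, (forall b, - r <= b <= r -> slice_value a <= slice_value b)
    /\ - r <= a <= r.
  by apply: continuity_ab_min => [|b _]; [lra | apply: slice_value_continuous].
have clamp_a : clamp r a = a by apply: clamp_id; split_Rabs; lra.
have [y_in y_min] := slice_minP a; rewrite /slice clamp_a in y_in y_min.
exists (slice_min a); split.
  move=> j; have [y_s y_out] := y_in j; rewrite inE negb_or; split.
    case/orP => [/eqP ->|]; last exact: y_s.
    by rewrite slice_min_coord clamp_a; split_Rabs; lra.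
  by case/andP => ji js; rewrite y_out // upd_other.
move=> z z_in; have zi_bd : Rabs (z i) <= r by apply: (proj1 (z_in i)); rewrite mem_head.
have z_slice : InBox r s (slice (z i)) z.
  move=> j; have [z_s z_out] := z_in j; split.
    by move=> js; apply: z_s; rewrite inE js orbT.
  move=> js; rewrite /slice clamp_id //; case: (eqVneq j i) => [->|ji].
    by rewrite upd_same.
  by rewrite upd_other // z_out // inE negb_or ji.
have [_ z_min] := slice_minP (z i); have := z_min z z_slice.
by have := a_min (z i) ltac:(split_Rabs; lra); rewrite /slice_value; lra.
Qed.
End AddCoordinate.

Lemma box_min s : uniq s -> forall x0, exists y, box_minimum s x0 y.
Proof.
elim: s => [_ x0|i s IH /= /andP [i_notin uniq_s] x0].
  exists x0; split; first by move=> j; split.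
  move=> z z_in; have -> : z = x0 by apply: functional_extensionality => j; apply: (proj2 (z_in j)).
  lra.
exact: box_min_cons i_notin (IH uniq_s).
Qed.
End BoxMinimum.

Definition unit_vec {n} (i : 'I_n) : vec n := fun j => if j == i then 1 else 0.

Lemma norm_zero {n} (N : vec n -> R) : is_norm N -> N vzero = 0.
Proof.
move=> [_ [_ [N_scale _]]]; have -> : (vzero : vec n) = vscale 0 vzero.
  by apply: functional_extensionality => j; rewrite /vscale /vzero; ring.
by rewrite N_scale Rabs_R0; ring.
Qed.

Lemma norm_upd_lipschitz {n} (N : vec n -> R) y i b : is_norm N ->
  Rabs (N (upd y i b) - N y) <= N (unit_vec i) * Rabs (b - y i).
Proof.
move=> [N_ge0 [_ [N_scale N_triangle]]].
have E1 : upd y i b = vadd y (vscale (b - y i) (unit_vec i)).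
  apply: functional_extensionality => j; rewrite /upd /vadd /vscale /unit_vec.
  by case: (eqVneq j i) => [->|_]; ring.
have E2 : y = vadd (upd y i b) (vscale (y i - b) (unit_vec i)).
  apply: functional_extensionality => j; rewrite /upd /vadd /vscale /unit_vec.
  by case: (eqVneq j i) => [->|_]; ring.
have := N_triangle y (vscale (b - y i) (unit_vec i)); rewrite N_scale -E1.
have := N_triangle (upd y i b) (vscale (y i - b) (unit_vec i)); rewrite N_scale -E2.
rewrite (Rabs_minus_sym (y i) b).
by have := Rabs_pos (b - y i); have := N_ge0 (unit_vec i); split_Rabs; nra.
Qed.

(* On the face {x_k = 1, |x_j| <= 1} of the unit cube, N is bounded below by a
   positive constant: its minimum there is attained at a nonzero point. *)
Lemma norm_face_lower_bound {n} (N : vec n -> R) (k : 'I_n) : is_norm N ->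
  exists m, 0 < m /\ forall x, x k = 1 -> (forall j, Rabs (x j) <= 1) -> m <= N x.
Proof.
move=> normN; have [N_ge0 [N_def _]] := normN.
set s := [seq j <- enum 'I_n | j != k].
have k_notin : k \notin s by rewrite mem_filter eqxx.
have [y [y_in y_min]] := box_min _ N _ _ (fun i => N_ge0 (unit_vec i)) Rle_0_1
  (fun y i b => norm_upd_lipschitz N y i b normN) s (filter_uniq _ (enum_uniq _)) (unit_vec k).
have yk : y k = 1 by have [_ ->] := y_in k => //; rewrite /unit_vec eqxx.
exists (N y); split.
  case: (N_ge0 y) => // /esym /N_def y0.
  by move: yk; rewrite y0 /vzero; lra.
move=> x xk x_bd; apply: y_min => j; split => // js.
have -> : j = k by move: js; rewrite mem_filter mem_enum andbT negbK => /eqP.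
by rewrite xk /unit_vec eqxx.
Qed.

Lemma finite_positive_bound {T : finType} (P : T -> R -> Prop) :
  (forall k m m', 0 < m' <= m -> P k m -> P k m') ->
  (forall k, exists m, 0 < m /\ P k m) -> exists m, 0 < m /\ forall k, P k m.
Proof.
move=> P_down P_ex.
suff [m [m_gt0 Pm]] : exists m, 0 < m /\ forall k, k \in enum T -> P k m.
  by exists m; split => // k; apply: Pm; rewrite mem_enum.
elim: (enum T) => [|k s [m [m_gt0 Pm]]]; first by exists 1; split => //; lra.
have [mk [mk_gt0 Pk]] := P_ex k.
have min_gt0 := Rmin_pos _ _ mk_gt0 m_gt0.
exists (Rmin mk m); split => // k'; rewrite inE => /orP [/eqP ->|k's].
  by apply: P_down Pk; split => //; apply: Rmin_l.
by apply: P_down (Pm k' k's); split => //; apply: Rmin_r.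
Qed.

Lemma norm_coord_lower_bound {n} (N : vec n -> R) : is_norm N ->
  exists m, 0 < m /\ forall x i, m * Rabs (x i) <= N x.
Proof.
move=> normN; have [N_ge0 [_ [N_scale _]]] := normN.
have [m [m_gt0 faces]] := finite_positive_bound
  (fun k m => forall x, x k = 1 -> (forall j, Rabs (x j) <= 1) -> m <= N x)
  ltac:(by move=> k m m' ? Pm x xk x_bd; have := Pm x xk x_bd; lra)
  (fun k => norm_face_lower_bound N k normN).
exists m; split => // x i.
have [k xk_max] := fmax_attained (fun j => Rabs (x j)) (inhabits i).
have x_le_k : forall j, Rabs (x j) <= Rabs (x k).
  by move=> j; rewrite -xk_max; apply: (fmax_ge (fun j => Rabs (x j))).
case: (Req_dec (x k) 0) => [xk0|xk_neq0].
  by have := x_le_k i; rewrite xk0 Rabs_R0; have := Rabs_pos (x i); have := N_ge0 x; nra.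
have xk_gt0 : 0 < Rabs (x k) by apply: Rabs_pos_lt.
have on_face : m <= N (vscale (/ x k) x).
  apply: (faces k) => [|j]; first by rewrite /vscale; field.
  rewrite /vscale Rabs_mult Rabs_inv; apply: (Rmult_le_reg_l (Rabs (x k))) => //.
  by rewrite -Rmult_assoc Rinv_r; have := x_le_k j; lra.
move: on_face; rewrite N_scale Rabs_inv => on_face.
have : m * Rabs (x k) <= N x.
  apply: (Rmult_le_reg_l (/ Rabs (x k))); first exact: Rinv_0_lt_compat.
  by have -> : / Rabs (x k) * (m * Rabs (x k)) = m by field; lra.
by have := x_le_k i; nra.
Qed.

(* The dual norm is the least upper bound of {<x, y> | N x <= 1}: the set is
   nonempty and bounded, as the N-unit ball lies in a cube. *)
Lemma dual_norm_lub {n} (N : vec n -> R) (y : vec n) : is_norm N ->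
  is_lub (fun r => exists x, N x <= 1 /\ r = inner x y) (dual_norm N y).
Proof.
move=> normN; have [m [m_gt0 N_coord]] := norm_coord_lower_bound N normN.
have bounded : bound (fun r => exists x, N x <= 1 /\ r = inner x y).
  exists (/ m * \big[Rplus/0]_(i < n) Rabs (y i)) => r [x [Nx ->]].
  rewrite big_distrr /=; apply: sumR_le => i.
  have xi_bd : Rabs (x i) <= / m.
    apply: (Rmult_le_reg_l m) => //; rewrite Rinv_r; have := N_coord x i; lra.
  have := Rle_abs (x i * y i); rewrite Rabs_mult.
  by have := Rabs_pos (y i); have := Rabs_pos (x i); nra.
have nonempty : exists r, exists x, N x <= 1 /\ r = inner x y.
  by exists 0, vzero; rewrite (norm_zero N) // inner_zero_l; split => //; lra.
have [l l_lub] := completeness _ bounded nonempty.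
by rewrite /dual_norm /Rsup; apply: epsilon_spec; exists l.
Qed.

Lemma dual_norm_ge0 {n} (N : vec n -> R) (y : vec n) : is_norm N -> 0 <= dual_norm N y.
Proof.
move=> normN; apply: (proj1 (dual_norm_lub N y normN)).
by exists vzero; rewrite (norm_zero N) // inner_zero_l; split => //; lra.
Qed.

Lemma inner_le_dual {n} (N : vec n -> R) (w y : vec n) : is_norm N ->
  inner w y <= N w * dual_norm N y.
Proof.
move=> normN; have [N_ge0 [N_def [N_scale _]]] := normN.
have [dual_ub _] := dual_norm_lub N y normN.
case: (N_ge0 w) => [Nw_gt0|/esym /N_def ->]; last first.
  by rewrite (norm_zero N) // inner_zero_l; have := dual_norm_ge0 N y normN; lra.
have unit_w : N (vscale (/ N w) w) <= 1.
  by rewrite N_scale Rabs_inv Rabs_pos_eq ?Rinv_l; lra.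
have := dual_ub _ (ex_intro _ _ (conj unit_w erefl)); rewrite inner_scale_l => le_dual.
have := Rmult_le_compat_l (N w) _ _ (N_ge0 w) le_dual.
by rewrite -Rmult_assoc Rinv_r; lra.
Qed.

Lemma ell_affine {Y Z : finType} {n} (psi : Z -> vec n) (phi : Y -> vec n) c z q :
  is_prob q -> ell psi phi c z q = inner (psi z) (mu phi q) + c.
Proof.
move=> [_ q_sum1]; rewrite /ell /Lt /inner /mu.
rewrite (eq_bigr (fun y => \big[Rplus/0]_(i < n) (psi z i * (q y * phi y i)) + c * q y));
  last by move=> y _; rewrite RmulDr big_distrr /=; congr (_ + _); [apply: eq_bigr => i _|]; ring.
rewrite big_split /= -big_distrr /= q_sum1 exchange_big /=; congr (_ + _); last ring.
by apply: eq_bigr => i _; rewrite big_distrr.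
Qed.

Lemma c_psi_ge0 {Z : finType} {n} (N : vec n -> R) (psi : Z -> vec n) :
  is_norm N -> inhabited Z -> 0 <= c_psi N psi.
Proof.
move=> normN [z]; have := fmax_ge (fun z => dual_norm N (psi z)) z.
by have := dual_norm_ge0 N (psi z) normN; rewrite /c_psi; lra.
Qed.

(* Decoding the point u loses at most 2 c N(mu - u) against the best prediction:
   z(u) minimises <psi z, u>, and <psi z, mu - u> is controlled by the dual norm. *)
Lemma excess_loss_le {Y Z : finType} {n} (psi : Z -> vec n) (phi : Y -> vec n) c
    (zsel : vec n -> Z) (N : vec n -> R) (q : Y -> R) (u : vec n) :
  inhabited Z -> is_prob q -> is_argmin_rule psi zsel -> is_norm N ->
  delta_ell psi phi c (zsel u) q <= 2 * c_psi N psi * N (vsub (mu phi q) u).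
Proof.
move=> inhZ probq argmin normN; have [N_ge0 [_ [N_scale _]]] := normN.
set w := vsub (mu phi q) u; set C := c_psi N psi; set z := zsel u.
rewrite /delta_ell.
have [zs ->] : exists zs, fmin (fun z' => ell psi phi c z' q) = ell psi phi c zs q.
  exact: fmin_attained.
rewrite !ell_affine //.
have dual_le_C : forall z', N w * dual_norm N (psi z') <= N w * C.
  move=> z'; apply: Rmult_le_compat_l => //.
  exact: (fmax_ge (fun z => dual_norm N (psi z)) z').
have hoelder_z := inner_le_dual N w (psi z) normN.
have hoelder_zs := inner_le_dual N (vscale (-1) w) (psi zs) normN.
rewrite inner_scale_l N_scale Rabs_Ropp Rabs_R1 in hoelder_zs.
have := argmin u zs; have := dual_le_C z; have := dual_le_C zs.
rewrite -/z !(inner_comm w) !inner_sub_r in hoelder_z hoelder_zs *; lra.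
Qed.

(* The arithmetic of the final step: eps <= 2 C a implies
   eps^2/(8 C^2 beta) <= a^2/(2 beta) (both sides vanish when C = 0). *)
Lemma calibration_arith {eps C a beta : R} :
  0 <= eps -> 0 <= C -> 0 < beta -> eps <= 2 * C * a ->
  eps ^ 2 / (8 * C ^ 2 * beta) <= / (2 * beta) * a ^ 2.
Proof.
move=> eps_ge0 C_ge0 beta_gt0 eps_le.
have rhs_ge0 : 0 <= / (2 * beta) * a ^ 2.
  by apply: Rmult_le_pos; [apply/Rlt_le/Rinv_0_lt_compat; lra | apply: pow2_ge_0].
case: C_ge0 => [C_gt0|<-]; last first.
  by rewrite /Rdiv (_ : 8 * 0 ^ 2 * beta = 0) ?Rinv_0 ?Rmult_0_r //; ring.
have denom_gt0 : 0 < 8 * C ^ 2 * beta by have := pow_lt C 2 C_gt0; nra.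
apply: (Rmult_le_reg_r (8 * C ^ 2 * beta)) => //.
rewrite /Rdiv Rmult_assoc Rinv_l; last lra.
have -> : / (2 * beta) * a ^ 2 * (8 * C ^ 2 * beta) = (2 * C * a) ^ 2 by field; lra.
by nra.
Qed.

Theorem theorem4p3 (Y Z : finType) (n : nat) (psi : Z -> vec n) (phi : Y -> vec n)
  (c : R) (V : Type) (openV : (V -> Prop) -> Prop) (S : V -> Y -> R)
  (D : vec n -> Prop) (h : vec n -> R) (grad : vec n -> vec n)
  (t : vec n -> V) (tinv : V -> vec n) (zsel : vec n -> Z)
  (N : vec n -> R) (beta : R) :
  inhabited Y -> inhabited Z ->
  phi_calibrated openV S phi D h grad t tinv ->
  is_argmin_rule psi zsel ->
  is_norm N -> 0 < beta -> strongly_convex_on D h grad N beta ->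
  forall eps : R, 0 <= eps ->
  forall (v : V) (q : Y -> R), is_prob q ->
    eps <= delta_ell psi phi c (decode zsel tinv v) q ->
    eps ^ 2 / (8 * (c_psi N psi) ^ 2 * beta) <= delta_s S v q.
Proof.
move=> _ inhZ [_ [hull_in_D [_ [_ [_ [_ [tinvP [_ [_ calibrated]]]]]]]]] argmin normN
  beta_gt0 strong_cvx eps eps_ge0 v q probq eps_le.
set u := tinv v; set w := vsub (mu phi q) u.
(* Strong convexity bounds the Bregman divergence, i.e. the surrogate excess risk. *)
have surrogate_ge : / (2 * beta) * N w ^ 2 <= delta_s S v q.
  have D_mu : D (mu phi q) by apply: hull_in_D; exists q.
  have := strong_cvx _ _ D_mu (proj1 (tinvP v)).
  by rewrite (calibrated v q probq) /bregman -/u -/w; lra.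
have loss_le := excess_loss_le psi phi c zsel N q u inhZ probq argmin normN.
have := calibration_arith eps_ge0 (c_psi_ge0 N psi normN inhZ) beta_gt0
  (Rle_trans _ _ _ eps_le loss_le).
by rewrite -/w; lra.
Qed.
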